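(* For every integer $l\ge 0$, the ideal $I_l\subset\mathbb{Z}[q,q^{-1}]$ is principal; it equals $g_l\,\mathbb{Z}[q,q^{-1}]$, where $g_l=\mathrm{GCD}(f_{l,0},\dots,f_{l,l})$. Moreover, up to a unit of $\mathbb{Z}[q,q^{-1}]$, $$g_l=\prod_{m\ge 1}\Phi_m^{t_{l,m}},\qquad t_{l,m}=\begin{cases}\lfloor \tfrac{l+1}{m}\rfloor-1 & \text{for } 1\le m\le l,\\ 0 & \text{for } m>l.\end{cases}$$
   Context: Work in the ring $\mathbb{Z}[q,q^{-1}]$ of Laurent polynomials, a unique factorization domain whose units are $\pm q^j$. For $i\in\mathbb{Z}$ and $n\ge 0$ set $\{i\}_q=q^i-1$, $\{i\}_{q,n}=\{i\}_q\{i-1\}_q\cdots\{i-n+1\}_q$ (the empty product, equal to $1$, when $n=0$), and $\{n\}_q!=\{n\}_{q,n}$ (so $\{0\}_q!=1$). For $0\le k\le l$ set $f_{l,k}=\{l-k\}_q!\,\{k\}_q!$, and let $I_l$ be the ideal of $\mathbb{Z}[q,q^{-1}]$ generated by $f_{l,0},\dots,f_{l,l}$. $\mathrm{GCD}$ denotes a greatest common divisor in $\mathbb{Z}[q,q^{-1}]$ (defined up to units). $\Phi_m=\prod_{d\mid m}(q^d-1)^{\mu(m/d)}$ is the $m$th cyclotomic polynomial ($\mu$ the Möbius function), and $\lfloor r\rfloor$ is the largest integer $\le r$. *)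

(* Z[q,q^{-1}] is modelled as the subring of the fraction
   field  {fraction {poly int}}  consisting of elements  p(q) / q^n. *)
From HB Require Import structures.
From mathcomp Require Import all_boot all_order all_algebra all_field.
Set Implicit Arguments. Unset Strict Implicit. Unset Printing Implicit Defensive.
Import Order.TTheory GRing.Theory Num.Theory.
Local Open Scope ring_scope.

Definition Fq := {fraction {poly int}}.

Definition qv : Fq := tofrac (('X : {poly int})).

Definition laurent (x : Fq) : Prop :=
  exists (p : {poly int}) (n : nat), x = tofrac p / qv ^+ n.

Definition qbr (i : int) : Fq := qv ^ i - 1.
Definition qbrn (i : int) (n : nat) : Fq := \prod_(j < n) qbr (i - j%:Z).
Definition qfact (n : nat) : Fq := qbrn n%:Z n.
Definition f (l k : nat) : Fq := qfact (l - k) * qfact k.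

Definition ldvd (a b : Fq) : Prop := exists c, laurent c /\ b = a * c.

Definition in_I (l : nat) (x : Fq) : Prop :=
  exists c : nat -> Fq, (forall k, laurent (c k)) /\
    x = \sum_(k < l.+1) c k * f l k.

Definition is_gcd_f (l : nat) (g : Fq) : Prop :=
  laurent g /\ (forall k, (k <= l)%N -> ldvd g (f l k)) /\
  (forall d, laurent d -> (forall k, (k <= l)%N -> ldvd d (f l k)) -> ldvd d g).

Definition assoc (a b : Fq) : Prop :=
  exists u v, [/\ laurent u, laurent v, u * v = 1 & a = u * b].

Definition t (l m : nat) : nat :=
  if (1 <= m <= l)%N then ((l.+1) %/ m - 1)%N else 0%N.

(* prod_{m>=1} Phi_m^{t_{l,m}}  (factors with m > l are 1) *)
Definition Pl (l : nat) : Fq :=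
  \prod_(1 <= m < l.+1) (tofrac ('Phi_m : {poly int})) ^+ t l m.

From HB Require Import structures.
From mathcomp Require Import all_boot all_order all_algebra all_field.
From mathcomp Require Import zify ring.
Set Implicit Arguments. Unset Strict Implicit. Unset Printing Implicit Defensive.
Import Order.TTheory GRing.Theory Num.Theory.
Local Open Scope ring_scope.

(* Everything is computed in Z[q] through cyclotomic exponents: {n}_q = q^n - 1
   is prod_{m | n} Phi_m, so Phi_m occurs in {n}_q! exactly floor(n/m) times, and
   floor((l-k)/m) + floor(k/m) >= t_{l,m} shows that P_l divides every f_{l,k}.
   Conversely P_l lies in I_l:
   - by induction on l, using the q-Pascal recursion, each {l+1}_q!/{j}_q lies in I_l;
   - {l+1}_q!/{j}_q = P_l * Q_j, where Q_j is the product of the Phi_m, m <= l+1,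
     with m not dividing j;
   - the Q_j generate the unit ideal of Z[q], because Phi_n and Phi_m are comaximal
     when m < n and m does not divide n (both ideals contain n/gcd and m/gcd). *)

Section TwoGeneratedIdeals.
Variable R : comPzRingType.
Implicit Types a b c : R.

Definition in_ideal2 a b c : Prop := exists u v, c = u * a + v * b.

Definition comaximal a b : Prop := in_ideal2 a b 1.

Lemma in_ideal2_comb a b c1 c2 r1 r2 :
  in_ideal2 a b c1 -> in_ideal2 a b c2 -> in_ideal2 a b (r1 * c1 + r2 * c2).
Proof.
move=> [u1 [v1 ->]] [u2 [v2 ->]].
by exists (r1 * u1 + r2 * u2), (r1 * v1 + r2 * v2); ring.
Qed.

Lemma in_ideal2C a b c : in_ideal2 a b c -> in_ideal2 b a c.
Proof. by move=> [u [v ->]]; exists v, u; rewrite addrC. Qed.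

Lemma in_ideal2_dvd a b a' b' wa wb c :
  a = a' * wa -> b = b' * wb -> in_ideal2 a b c -> in_ideal2 a' b' c.
Proof. by move=> -> -> [u [v ->]]; exists (u * wa), (v * wb); ring. Qed.

Lemma comaximal1 a : comaximal a 1.
Proof. by exists 0, 1; rewrite mul0r add0r mulr1. Qed.

Lemma comaximalM a b c : comaximal a b -> comaximal a c -> comaximal a (b * c).
Proof.
move=> [u [v Eb]] [u' [v' Ec]].
exists (u * u' * a + u * v' * c + v * b * u'), (v * v').
by rewrite -[1](mulr1 1) {1}Eb Ec; ring.
Qed.

Lemma comaximal_prod a (I : Type) (r : seq I) (P : pred I) (F : I -> R) :
  (forall i, P i -> comaximal a (F i)) -> comaximal a (\prod_(i <- r | P i) F i).
Proof. by move=> HF; apply: big_ind => //; [exact: comaximal1 | exact: comaximalM]. Qed.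

End TwoGeneratedIdeals.

Section GeometricSums.
Variables (R : comPzRingType) (x : R).

Lemma geom_telescope g i : (x ^+ g - 1) * \sum_(j < i) x ^+ (g * j) = x ^+ (g * i) - 1.
Proof.
elim: i => [|i IH]; first by rewrite big_ord0 muln0 mulr0 expr0 subrr.
by rewrite big_ord_recr /= mulrDr IH mulnS exprD; ring.
Qed.

Lemma geom_sum_mod g d :
  exists w, \sum_(i < d) x ^+ (g * i) = d%:R + (x ^+ g - 1) * w.
Proof.
elim: d => [|d [w IH]]; first by exists 0; rewrite big_ord0 mulr0 addr0.
exists (w + \sum_(j < d) x ^+ (g * j)).
by rewrite [in LHS]big_ord_recr /= [in LHS]IH mulrDr geom_telescope mulrSr; ring.
Qed.

(* Euclid's algorithm on exponents: x^(gcd a b) - 1 lies in (x^a - 1, x^b - 1) *)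
Lemma expr_gcd_in_ideal2 a b :
  in_ideal2 (x ^+ a - 1) (x ^+ b - 1) (x ^+ gcdn a b - 1).
Proof.
elim: {a b}(a + b)%N {-2}a {-2}b (leqnn (a + b)%N) => [|s IH] a b Hs.
  have [-> ->] : a = 0%N /\ b = 0%N by lia.
  by exists 1, 0; rewrite gcdn0; ring.
have [a0|a0] := posnP a; first by rewrite a0 gcd0n; exists 0, 1; ring.
have [b0|b0] := posnP b; first by rewrite b0 gcdn0; exists 1, 0; ring.
wlog ba : a b Hs a0 b0 / (b <= a)%N.
  move=> Hw; have [|/ltnW ab] := leqP b a; first exact: Hw.
  by rewrite gcdnC; apply/in_ideal2C/Hw; rewrite // addnC.
have [u [v E]] := IH (a - b)%N b ltac:(lia).
have Eg : gcdn a b = gcdn (a - b) b by rewrite gcdnC -{1}(subnK ba) gcdnDr gcdnC.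
have Ea : x ^+ a = x ^+ (a - b) * x ^+ b by rewrite -exprD subnK.
by exists u, (v - u * x ^+ (a - b)); rewrite Eg E Ea; ring.
Qed.

End GeometricSums.

Definition qint (n : nat) : {poly int} := 'X^n - 1.

Definition cycprod (B : nat) (e : nat -> nat) : {poly int} :=
  \prod_(1 <= m < B) 'Phi_m ^+ e m.

Lemma Phi_neq0 m : 'Phi_m != 0.
Proof. exact/monic_neq0/Cyclotomic_monic. Qed.

Lemma cycprod_neq0 B e : cycprod B e != 0.
Proof. by rewrite prodf_seq_neq0; apply/allP => i _; rewrite expf_neq0 ?Phi_neq0. Qed.

Lemma cycprodD B e1 e2 :
  cycprod B e1 * cycprod B e2 = cycprod B (fun m => e1 m + e2 m)%N.
Proof. by rewrite -big_split; apply: eq_bigr => m _; rewrite exprD. Qed.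

Lemma eq_cycprod B e1 e2 :
  (forall m, (1 <= m < B)%N -> e1 m = e2 m) -> cycprod B e1 = cycprod B e2.
Proof. by move=> E; apply: eq_big_nat => m /E ->. Qed.

Lemma cycprod_split B e e1 : (forall m, (1 <= m < B)%N -> e1 m <= e m)%N ->
  cycprod B e = cycprod B e1 * cycprod B (fun m => e m - e1 m)%N.
Proof. by move=> le_e; rewrite cycprodD; apply: eq_cycprod => m /le_e/subnKC. Qed.

Lemma cycprod_recr B e : cycprod B.+2 e = cycprod B.+1 e * 'Phi_B.+1 ^+ e B.+1.
Proof. exact: big_nat_recr. Qed.

Lemma qint_cycprod B n : (0 < n < B)%N -> qint n = cycprod B (fun m => m %| n)%N.
Proof.
case/andP=> n0 nB; rewrite /qint -prod_Cyclotomic // /cycprod.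
rewrite [RHS](eq_bigr (fun m => if (m %| n)%N then 'Phi_m else 1)); last first.
  by move=> m _; case: (m %| n)%N; rewrite ?expr1 ?expr0.
rewrite -big_mkcond -[RHS]big_filter; apply: perm_big; apply: uniq_perm.
- exact: divisors_uniq.
- by rewrite filter_uniq // iota_uniq.
move=> m; rewrite mem_filter mem_index_iota -dvdn_divisors //.
case mn: (m %| n)%N => //=.
by rewrite (dvdn_gt0 n0 mn) (leq_ltn_trans (dvdn_leq n0 mn) nB).
Qed.

Lemma Phi_cycprod B n : (0 < n < B)%N -> 'Phi_n = cycprod B (fun m => m == n)%N.
Proof.
case/andP=> n0 nB; rewrite /cycprod (bigD1_seq n) ?mem_index_iota ?n0 ?iota_uniq //=.
by rewrite eqxx expr1 big1 ?mulr1 // => m /negPf ->.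
Qed.

Lemma qint_neq0 n : (0 < n)%N -> qint n != 0.
Proof. by move=> n0; rewrite (@qint_cycprod n.+1) ?cycprod_neq0 ?n0 ?ltnSn. Qed.

Lemma Phi_dvd_qint n : (0 < n)%N -> exists w, qint n = 'Phi_n * w.
Proof.
move=> n0; rewrite (@qint_cycprod n.+1) ?n0 ?ltnSn //.
rewrite (@cycprod_split _ _ (fun m => m == n)%N).
  by rewrite -(@Phi_cycprod n.+1 n) ?n0 ?ltnSn //; eexists.
by move=> m _; case: eqP => // ->; rewrite dvdnn.
Qed.

Definition qfact_poly (n : nat) : {poly int} := \prod_(1 <= i < n.+1) qint i.

Lemma qfact_cycprod B n : (n < B)%N -> qfact_poly n = cycprod B (fun m => n %/ m)%N.
Proof.
elim: n => [|n IH] nB.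
  by rewrite /qfact_poly big_geq // /cycprod big1 // => m _; rewrite div0n.
rewrite /qfact_poly big_nat_recr //= -/(qfact_poly n) IH ?(ltnW nB) //.
rewrite (@qint_cycprod B) ?nB // cycprodD.
by apply: eq_cycprod => m /andP[m0 _]; rewrite (divnS _ m0) addnC.
Qed.

Lemma Phi_dvd_geom g d : (0 < g)%N -> (1 < d)%N ->
  exists w, \sum_(i < d) 'X^(g * i) = 'Phi_(g * d) * w.
Proof.
move=> g0 d1; set m := (g * d)%N.
have m0 : (0 < m)%N by rewrite muln_gt0 g0 ltnW.
have gm : (g < m)%N by rewrite -[ltnLHS]muln1 ltn_pmul2l.
have gdm : (g %| m)%N by rewrite dvdn_mulr.
(* exponents of the cofactor: divisors of m that neither divide g nor equal m *)
pose e m' := ((m' %| m) - (m' %| g) - (m' == m))%N.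
have Em : qint m = qint g * ('Phi_m * cycprod m.+1 e).
  rewrite (@qint_cycprod m.+1 m) ?m0 ?ltnSn // (@qint_cycprod m.+1 g) ?g0 ?ltnS ?(ltnW gm) //.
  rewrite (@cycprod_split _ _ (fun k => k %| g)%N); last first.
    by move=> k _; case kg: (k %| g)%N => //=; rewrite (dvdn_trans kg gdm).
  rewrite (@cycprod_split _ (fun k => _ - _)%N (fun k => k == m)%N).
    by rewrite -(@Phi_cycprod m.+1 m) ?m0 ?ltnSn.
  move=> k /andP[k0 _]; case: eqP => // ->.
  by rewrite dvdnn gtnNdvd.
exists (cycprod m.+1 e); apply: (mulfI (qint_neq0 g0)).
by rewrite [LHS](geom_telescope 'X) -Em.
Qed.

Lemma div_gcd_in_ideal2 m n : (0 < m)%N -> (0 < n)%N -> (1 < m %/ gcdn m n)%N ->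
  in_ideal2 'Phi_m 'Phi_n (m %/ gcdn m n)%:R.
Proof.
move=> m0 n0 d1; set g := gcdn m n; set d := (m %/ g)%N.
have g0 : (0 < g)%N by rewrite gcdn_gt0 m0.
have mgd : m = (g * d)%N by rewrite mulnC divnK // dvdn_gcdl.
have Ig : in_ideal2 'Phi_m 'Phi_n (qint g).
  have [[wm Em] [wn En]] := (Phi_dvd_qint m0, Phi_dvd_qint n0).
  exact: in_ideal2_dvd Em En (expr_gcd_in_ideal2 'X m n).
have [w Ew] := Phi_dvd_geom g0 d1; rewrite -mgd in Ew.
have [v Ev] := geom_sum_mod ('X : {poly int}) g d.
have Isum : in_ideal2 'Phi_m 'Phi_n ('Phi_m * w) by exists w, 0; ring.
have -> : (d%:R : {poly int}) = 1 * ('Phi_m * w) + (- v) * qint g.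
  by rewrite -Ew Ev /qint; ring.
exact: in_ideal2_comb.
Qed.

Lemma Phi_comaximal m n : (0 < m < n)%N -> ~~ (m %| n)%N -> comaximal 'Phi_n 'Phi_m.
Proof.
case/andP=> m0 mn ndvd; have n0 : (0 < n)%N by apply: ltn_trans mn.
set g := gcdn m n.
have g0 : (0 < g)%N by rewrite gcdn_gt0 m0.
have gm : (g < m)%N.
  rewrite ltn_neqAle dvdn_leq ?dvdn_gcdl // andbT.
  by apply: contraNneq ndvd => <-; rewrite dvdn_gcdr.
have d1 : (1 < m %/ g)%N by rewrite ltn_divRL ?dvdn_gcdl ?mul1n.
have e1 : (1 < n %/ gcdn n m)%N.
  by rewrite gcdnC ltn_divRL ?dvdn_gcdr // mul1n (ltn_trans gm).
have Im := in_ideal2C (div_gcd_in_ideal2 m0 n0 d1).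
have In := div_gcd_in_ideal2 n0 m0 e1; rewrite gcdnC -/g in In.
have cop : coprime (m %/ g) (n %/ g).
  rewrite /coprime -(eqn_pmul2l g0) muln1 muln_gcdr.
  by rewrite ![(g * _)%N]mulnC !divnK ?dvdn_gcdl ?dvdn_gcdr.
have [x [y Exy]] := Bezoutz (m %/ g)%N (n %/ g)%N.
rewrite /gcdz /= (eqP cop) in Exy.
have E1 : (x%:~R * (m %/ g)%:R + y%:~R * (n %/ g)%:R : {poly int}) = 1.
  by rewrite !pmulrn -!intrM -intrD Exy.
by rewrite /comaximal -E1; apply: in_ideal2_comb.
Qed.

Definition nondiv_cycprod (N j : nat) : {poly int} :=
  cycprod N.+1 (fun m => ~~ (m %| j))%N.

(* the products nondiv_cycprod (N+1) j, 1 <= j <= N+1, generate the unit ideal of Z[q],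
   by induction on N: Phi_(N+2) is comaximal with nondiv_cycprod (N+2) (N+2) *)
Lemma nondiv_cycprod_unit N : exists c : nat -> {poly int},
  \sum_(1 <= j < N.+2) c j * nondiv_cycprod N.+1 j = 1.
Proof.
elim: N => [|N [c Ec]].
  by exists (fun _ => 1); rewrite big_nat1 mul1r /nondiv_cycprod /cycprod big_nat1 expr0.
have [a [b Eab]] : comaximal 'Phi_N.+2 (nondiv_cycprod N.+2 N.+2).
  rewrite /nondiv_cycprod /cycprod big_nat_cond; apply: comaximal_prod => m.
  rewrite andbT => /andP[m0 mN]; case: (boolP (m %| N.+2)%N) => [_|ndvd].
    by rewrite expr0; apply: comaximal1.
  have mlt : (m < N.+2)%N.
    by rewrite ltn_neqAle -ltnS mN andbT; apply: contraNneq ndvd => ->.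
  by rewrite expr1; apply: Phi_comaximal ndvd; rewrite m0 mlt.
exists (fun j => if j == N.+2 then b else a * c j).
rewrite big_nat_recr //= eqxx.
rewrite (eq_big_nat _ _ (F2 := fun j => a * 'Phi_N.+2 * (c j * nondiv_cycprod N.+1 j))).
  by rewrite -big_distrr /= Ec mulr1 -Eab.
move=> j /andP[j0 jN]; have /negbTE -> : j != N.+2 by rewrite ltn_eqF.
rewrite /nondiv_cycprod cycprod_recr gtnNdvd //= expr1; ring.
Qed.

Lemma qv_neq0 : qv != 0.
Proof. by rewrite tofrac_eq0 polyX_eq0. Qed.

Lemma laurent_tofrac p : laurent (tofrac p).
Proof. by exists p, 0%N; rewrite expr0 divr1. Qed.

Lemma laurentM x y : laurent x -> laurent y -> laurent (x * y).
Proof.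
move=> [p [a ->]] [r [b ->]]; exists (p * r), (a + b)%N.
by rewrite mulf_div exprD rmorphM.
Qed.

Lemma laurentD x y : laurent x -> laurent y -> laurent (x + y).
Proof.
move=> [p [a ->]] [r [b ->]]; exists (p * 'X^b + r * 'X^a), (a + b)%N.
by rewrite addf_div ?expf_neq0 ?qv_neq0 // exprD rmorphD !rmorphM !rmorphXn.
Qed.

Lemma qbr_tofrac n : qbr n%:Z = tofrac (qint n).
Proof. by rewrite /qbr /qint -exprnP rmorphB rmorphXn rmorph1. Qed.

Lemma qfact_tofrac n : qfact n = tofrac (qfact_poly n).
Proof.
rewrite /qfact /qbrn /qfact_poly rmorph_prod -(big_mkord xpredT (fun j => qbr (n%:Z - j%:Z))).
rewrite big_nat_rev big_add1; apply: eq_big_nat => i /andP[_ lt_in] /=.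
by rewrite add0n subzn ?leq_subr // subKn // qbr_tofrac.
Qed.

Lemma f_tofrac l k : f l k = tofrac (qfact_poly (l - k) * qfact_poly k).
Proof. by rewrite /f !qfact_tofrac rmorphM. Qed.

Lemma qfact_polyS n : qfact_poly n.+1 = qfact_poly n * qint n.+1.
Proof. exact: big_nat_recr. Qed.

Lemma qfact_pascal a b :
  qfact_poly a * qfact_poly b * qint (a + b).+2 =
  'X^(a.+1) * (qfact_poly a * qfact_poly b.+1) + qfact_poly a.+1 * qfact_poly b.
Proof. by rewrite -addSn -addnS !qfact_polyS /qint exprD; ring. Qed.

Section IdealI.
Variable l : nat.

Lemma in_I0 : in_I l 0.
Proof.
exists (fun=> 0); split=> [_|]; first exact: laurent_tofrac 0.
by rewrite big1 // => k _; rewrite mul0r.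
Qed.

Lemma in_ID x y : in_I l x -> in_I l y -> in_I l (x + y).
Proof.
move=> [c [Lc ->]] [d [Ld ->]]; exists (fun k => c k + d k); split.
  by move=> k; apply: laurentD.
by rewrite -big_split; apply: eq_bigr => k _; rewrite mulrDl.
Qed.

Lemma in_IM a x : laurent a -> in_I l x -> in_I l (a * x).
Proof.
move=> La [c [Lc ->]]; exists (fun k => a * c k); split.
  by move=> k; apply: laurentM.
by rewrite big_distrr /=; apply: eq_bigr => k _; rewrite mulrA.
Qed.

Lemma in_I_sum (I : Type) (r : seq I) (P : pred I) (F : I -> Fq) :
  (forall i, P i -> in_I l (F i)) -> in_I l (\sum_(i <- r | P i) F i).
Proof. by move=> HF; apply: big_ind => //; [exact: in_I0 | exact: in_ID]. Qed.

Lemma in_I_f k : (k <= l)%N -> in_I l (f l k).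
Proof.
move=> kl; exists (fun i => if i == k then 1 else 0); split.
  by move=> i; case: (i == k); [rewrite -tofrac1 | rewrite -tofrac0]; apply: laurent_tofrac.
rewrite (bigD1 (Ordinal (kl : (k < l.+1)%N))) //= eqxx mul1r big1 ?addr0 //.
by move=> i ik; rewrite -val_eqE /= in ik; rewrite (negPf ik) mul0r.
Qed.

End IdealI.

(* multiplication by {l+2}_q maps I_l into I_(l+1), by the q-Pascal recursion *)
Lemma in_I_step l x : in_I l x -> in_I l.+1 (x * tofrac (qint l.+2)).
Proof.
move=> [c [Lc ->]]; rewrite big_distrl /=; apply: in_I_sum => k _.
rewrite -mulrA; apply: in_IM => //.
have kl : (k <= l)%N by rewrite -ltnS.
have -> : f l k * tofrac (qint l.+2) = qv ^+ (l - k).+1 * f l.+1 k.+1 + f l.+1 k.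
  rewrite !f_tofrac subSS subSn // -rmorphXn -!rmorphM -rmorphD.
  by rewrite -qfact_pascal subnK.
apply: in_ID; last by apply: in_I_f; rewrite ltnW.
by apply: in_IM; [rewrite -rmorphXn; apply: laurent_tofrac | apply: in_I_f].
Qed.

Definition qfact_omit (l j : nat) : {poly int} := \prod_(1 <= i < l.+2 | i != j) qint i.

Lemma qfact_omit_last l : qfact_omit l l.+1 = qfact_poly l.
Proof.
rewrite /qfact_omit big_mkcond big_nat_recr //= eqxx mulr1.
by apply: eq_big_nat => i /andP[_ il]; rewrite ltn_eqF.
Qed.

Lemma qfact_omitS l j : (j <= l.+1)%N -> qfact_omit l.+1 j = qfact_omit l j * qint l.+2.
Proof.
move=> jl; rewrite /qfact_omit big_mkcond big_nat_recr //= -big_mkcond /=.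
by rewrite eq_sym ltn_eqF.
Qed.

Lemma f_l0 l : f l 0 = tofrac (qfact_poly l).
Proof. by rewrite f_tofrac subn0 [qfact_poly 0]big_geq // mulr1. Qed.

Lemma qfact_omit_in_I l j : (1 <= j <= l.+1)%N -> in_I l (tofrac (qfact_omit l j)).
Proof.
elim: l j => [|l IH] j /andP[j0 jl].
  have -> : j = 1%N by apply/anti_leq; rewrite j0 jl.
  by rewrite qfact_omit_last -f_l0; apply: in_I_f.
have [-> | ne_jl] := eqVneq j l.+2; first by rewrite qfact_omit_last -f_l0; apply: in_I_f.
have jl1 : (j <= l.+1)%N by rewrite -ltnS ltn_neqAle ne_jl jl.
by rewrite qfact_omitS // rmorphM; apply/in_I_step/IH; rewrite j0 jl1.
Qed.

Definition Pl_poly (l : nat) : {poly int} := cycprod l.+2 (t l).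

Lemma Pl_tofrac l : Pl l = tofrac (Pl_poly l).
Proof.
rewrite /Pl_poly cycprod_recr /t ltnn andbF expr0 mulr1 rmorph_prod.
by apply: eq_bigr => m _; rewrite rmorphXn.
Qed.

Lemma t_le_floor_sum l k m : (k <= l)%N -> (0 < m)%N ->
  (t l m <= (l - k) %/ m + k %/ m)%N.
Proof.
move=> kl m0; rewrite /t; case: ifP => // _.
rewrite leq_subLR -ltnS ltn_divLR // addnC.
have E1 := divn_eq (l - k) m; have E2 := divn_eq k m.
have r1 := ltn_pmod (l - k) m0; have r2 := ltn_pmod k m0.
nia.
Qed.

Lemma Pl_dvd_f l k : (k <= l)%N -> ldvd (Pl l) (f l k).
Proof.
move=> kl; have [lt_kl lt_lkl] : (k < l.+2)%N /\ (l - k < l.+2)%N by lia.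
rewrite f_tofrac Pl_tofrac !(@qfact_cycprod l.+2) // cycprodD.
rewrite (@cycprod_split _ _ (t l)) => [|m /andP[m0 _]]; last exact: t_le_floor_sum.
by rewrite rmorphM; eexists; split; [apply: laurent_tofrac | reflexivity].
Qed.

Lemma Pl_mul_nondiv l j : (1 <= j <= l.+1)%N ->
  Pl_poly l * nondiv_cycprod l.+1 j = qfact_omit l j.
Proof.
case/andP=> j0 jl; apply: (mulIf (qint_neq0 j0)).
have -> : qfact_omit l j * qint j = qfact_poly l.+1.
  by rewrite /qfact_poly (bigD1_seq j) ?mem_index_iota ?j0 ?ltnS ?iota_uniq //= mulrC.
rewrite (@qint_cycprod l.+2 j) ?j0 ?ltnS // !cycprodD (@qfact_cycprod l.+2) //.
apply: eq_cycprod => m /andP[m0 ml].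
have add_negb_b (b : bool) : (~~ b + b = 1)%N by case: b.
rewrite /t -addnA add_negb_b addn1 m0 /=; case: leqP => [_ | lt_lm].
  by rewrite subn1 prednK // divn_gt0.
have -> : m = l.+1 by apply/anti_leq; rewrite lt_lm -ltnS ml.
by rewrite divnn.
Qed.

(* Pl lies in I_l: write 1 = sum_j c_j (prod of Phi_m, m not dividing j) and multiply by Pl *)
Lemma Pl_in_I l : in_I l (Pl l).
Proof.
have [c Ec] := nondiv_cycprod_unit l.
have -> : Pl l = \sum_(1 <= j < l.+2) tofrac (c j) * tofrac (qfact_omit l j).
  rewrite Pl_tofrac -[Pl_poly l]mulr1 -Ec big_distrr rmorph_sum.
  apply: eq_big_nat => j jl; rewrite -Pl_mul_nondiv // -rmorphM.
  by congr tofrac; rewrite /= mulrCA.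
rewrite big_nat_cond; apply: in_I_sum => j /andP[jl _].
by apply: in_IM; [apply: laurent_tofrac | apply: qfact_omit_in_I].
Qed.

Lemma in_I_ldvd l d x :
  (forall k, (k <= l)%N -> ldvd d (f l k)) -> in_I l x -> ldvd d x.
Proof.
move=> dvd_f [c [Lc ->]]; apply: (big_ind (ldvd d)).
- by exists 0; split; [rewrite -tofrac0; apply: laurent_tofrac | rewrite mulr0].
- move=> _ _ [a [La ->]] [b [Lb ->]].
  by exists (a + b); split; [apply: laurentD | rewrite mulrDr].
- move=> k _; have [w [Lw ->]] := dvd_f k (ltn_ord k).
  by exists (c k * w); split; [apply: laurentM | rewrite mulrCA].
Qed.

Lemma Pl_gcd l : is_gcd_f l (Pl l).
Proof.
split; first by rewrite Pl_tofrac; apply: laurent_tofrac.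
split; first exact: Pl_dvd_f.
by move=> d _ dvd_f; apply: in_I_ldvd dvd_f (Pl_in_I l).
Qed.

Lemma Pl_neq0 l : Pl l != 0.
Proof. by rewrite Pl_tofrac tofrac_eq0 cycprod_neq0. Qed.

Theorem theorem3p1 (l : nat) :
  (exists g, is_gcd_f l g) /\
  (forall g, is_gcd_f l g ->
     (forall x, laurent x -> (in_I l x <-> ldvd g x)) /\ assoc g (Pl l)).
Proof.
split; first by exists (Pl l); apply: Pl_gcd.
move=> g [Lg [g_dvd_f g_max]]; have [Lp [Pl_dvd _]] := Pl_gcd l.
have [u [Lu E_Pl]] := g_max (Pl l) Lp Pl_dvd.
have [v [Lv E_g]] := in_I_ldvd g_dvd_f (Pl_in_I l).
have g_in_I : in_I l g by rewrite E_Pl mulrC; apply: in_IM => //; apply: Pl_in_I.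
split.
  move=> x _; split; first exact: in_I_ldvd.
  by move=> [c [Lc ->]]; rewrite mulrC; apply: in_IM.
exists u, v; split => //; last by rewrite E_Pl mulrC.
by apply: (mulfI (Pl_neq0 l)); rewrite mulr1 mulrA -E_Pl -E_g.
Qed.
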